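(* Let $(V_1, V_2)$ be an isometric pair such that $C(V_1, V_2)$ is compact. Then \[ \operatorname{rank} C(V_1, V_2) = 2\, \operatorname{rank} [V_2^*, V_1] + \dim E_1 - \dim E_{-1}. \]
   Context: All Hilbert spaces are complex and separable. An isometric pair is a pair $(V_1,V_2)$ of commuting isometries on $\mathcal{H}$. $[V_2^*,V_1] := V_2^*V_1 - V_1V_2^*$. $C(V_1,V_2) := I - V_1V_1^* - V_2V_2^* + V_1V_2V_1^*V_2^*$ and $E_\mu := \ker(C(V_1,V_2)-\mu I)$. *)

From HB Require Import structures.
From mathcomp Require Import all_boot all_order all_algebra.
From mathcomp Require Import boolp classical_sets reals constructive_ereal ereal.
From mathcomp.real_closed Require Import complex.
Set Implicit Arguments. Unset Strict Implicit. Unset Printing Implicit Defensive.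
Import Order.TTheory GRing.Theory Num.Theory.
Local Open Scope ring_scope.
Local Open Scope classical_set_scope.

Section Hilbert.
Variable R : realType.
Local Notation C := (R[i]).
Variable H : lmodType C.
Variable ip : H -> H -> C.

Definition hnorm (x : H) : C := sqrtC (ip x x).

Definition hcauchy (u : nat -> H) : Prop :=
  forall e : C, 0 < e -> exists N : nat, forall m n : nat,
    (N <= m)%N -> (N <= n)%N -> hnorm (u m - u n) < e.

Definition hconverges (u : nat -> H) (l : H) : Prop :=
  forall e : C, 0 < e -> exists N : nat, forall n : nat,
    (N <= n)%N -> hnorm (u n - l) < e.

Definition is_separable_hilbert : Prop :=
  [/\ (forall (a : C) (x y z : H), ip (a *: x + y) z = a * ip x z + ip y z),
      (forall x y : H, ip x y = (ip y x)^*),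
      (forall x : H, 0 <= ip x x),
      (forall x : H, ip x x = 0 -> x = 0) /\
      (forall u : nat -> H, hcauchy u -> exists l, hconverges u l)
    & (exists d : nat -> H, forall (x : H) (e : C), 0 < e ->
          exists n, hnorm (x - d n) < e)].

Definition h_isometry (T : H -> H) : Prop := forall x y : H, ip (T x) (T y) = ip x y.

Definition h_adjoint (T Ts : H -> H) : Prop :=
  forall x y : H, ip (T x) y = ip x (Ts y).

Definition h_compact (T : H -> H) : Prop :=
  forall u : nat -> H, (exists M : C, forall n, hnorm (u n) <= M) ->
    exists (phi : nat -> nat) (l : H),
      (forall n, (phi n < phi n.+1)%N) /\ hconverges (fun n => T (u (phi n))) l.

Definition indep_in (S : set H) (n : nat) : Prop :=
  exists v : 'I_n -> H, (forall i, S (v i)) /\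
    (forall c : 'I_n -> C, \sum_(i < n) c i *: v i = 0 -> forall i, c i = 0).

Definition h_dim (S : set H) : \bar R :=
  ereal_sup [set (n%:R)%:E | n in indep_in S].

Definition h_rank (T : H -> H) : \bar R := h_dim (range T).

Definition defect (V1 V2 V1s V2s : H -> H) : H -> H :=
  fun x => x - V1 (V1s x) - V2 (V2s x) + V1 (V2 (V1s (V2s x))).

Definition commut (V1 V2s : H -> H) : H -> H :=
  fun x => V2s (V1 x) - V1 (V2s x).

Definition eigsp (T : H -> H) (mu : C) : set H := [set x | T x = mu *: x].

End Hilbert.

(* Let P = I - V2 V2* (the projection onto ker V2* ) and Q = V1 P V1* (the
   projection onto V1 ker V2* ).  Then C(V1,V2) = P - Q =: A, and
   (I - P) Q = V2 [V2*,V1] V1*, whose range has the dimension of the range of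
   [V2*,V1] because V1* is onto and V2 is injective.
   For a difference of two orthogonal projections, E_1 = ran P /\ ker Q and
   E_-1 = ker P /\ ran Q.  Put M1 = ran P(I - Q), M2 = ran (I - P)Q and
   F = (I - P)Q M1.  The map (I - P)Q sends M1 onto F with kernel E_1, and M2
   is the orthogonal sum of F and E_-1; so dim M1 = dim E_1 + dim F and
   dim M2 = dim F + dim E_-1.  Every r in ran A is P r + (r - P r), in M1 + M2,
   a direct sum since P is the identity on M1 and 0 on M2.  When ran A is
   finite-dimensional, the self-adjoint A is injective on it, so ran A = ran A^2;
   as A^2 commutes with P this puts M1 and M2 inside ran A, whence
   rank A = dim M1 + dim M2 = 2 dim M2 + dim E_1 - dim E_-1.  If F is
   infinite-dimensional, both sides are infinite.  Compactness only serves to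
   make E_1 and E_-1 finite-dimensional. *)

From HB Require Import structures.
From mathcomp Require Import all_boot all_order all_algebra.
From mathcomp Require Import boolp classical_sets reals constructive_ereal ereal.
From mathcomp.real_closed Require Import complex.
From mathcomp Require Import ring.
Import Order.TTheory GRing.Theory Num.Theory.
Set Implicit Arguments. Unset Strict Implicit. Unset Printing Implicit Defensive.
Local Open Scope ring_scope.
Local Open Scope classical_set_scope.

Definition fcat (T : Type) n1 n2 (v1 : 'I_n1 -> T) (v2 : 'I_n2 -> T) : 'I_(n1 + n2) -> T :=
  fun i => match split i with inl j => v1 j | inr j => v2 j end.

Lemma fcat_lshift (T : Type) n1 n2 (v1 : 'I_n1 -> T) (v2 : 'I_n2 -> T) j :
  fcat v1 v2 (lshift n2 j) = v1 j.
Proof. by rewrite /fcat (unsplitK (inl _ j)). Qed.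

Lemma fcat_rshift (T : Type) n1 n2 (v1 : 'I_n1 -> T) (v2 : 'I_n2 -> T) j :
  fcat v1 v2 (rshift n1 j) = v2 j.
Proof. by rewrite /fcat (unsplitK (inr _ j)). Qed.

Lemma fcat_in (T : Type) (S : set T) n1 n2 (v1 : 'I_n1 -> T) (v2 : 'I_n2 -> T) :
  (forall i, S (v1 i)) -> (forall i, S (v2 i)) -> forall i, S (fcat v1 v2 i).
Proof. by move=> S1 S2 i; rewrite /fcat; case: split. Qed.

Section Families.
Variables (K : fieldType) (H : lmodType K).

Definition lcomb n (c : 'I_n -> K) (v : 'I_n -> H) : H := \sum_(i < n) c i *: v i.
Definition lspan n (v : 'I_n -> H) : set H := [set x | exists c, x = lcomb c v].
Definition indep n (v : 'I_n -> H) : Prop := forall c, lcomb c v = 0 -> forall i, c i = 0.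
Definition subspace (S : set H) : Prop :=
  S 0 /\ forall a x y, S x -> S y -> S (a *: x + y).
Definition finite_dim (S : set H) : Prop := exists n (v : 'I_n -> H), S `<=` lspan v.

Lemma eq_lcomb n (c : 'I_n -> K) (v w : 'I_n -> H) : v =1 w -> lcomb c v = lcomb c w.
Proof. by move=> vw; apply: eq_bigr => i _; rewrite vw. Qed.

Lemma lcomb_fcat n1 n2 (c : 'I_(n1 + n2) -> K) (v1 : 'I_n1 -> H) (v2 : 'I_n2 -> H) :
  lcomb c (fcat v1 v2) =
  lcomb (fun j => c (lshift n2 j)) v1 + lcomb (fun j => c (rshift n1 j)) v2.
Proof.
by rewrite /lcomb big_split_ord; congr (_ + _); apply: eq_bigr => j _;
  rewrite ?fcat_lshift ?fcat_rshift.
Qed.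

Lemma linear_lcomb (f : {linear H -> H}) n (c : 'I_n -> K) (v : 'I_n -> H) :
  f (lcomb c v) = lcomb c (f \o v).
Proof. by rewrite /lcomb linear_sum; apply: eq_bigr => i _; rewrite linearZ. Qed.

Lemma lspan_fcatD n1 n2 (v1 : 'I_n1 -> H) (v2 : 'I_n2 -> H) x y :
  lspan v1 x -> lspan v2 y -> lspan (fcat v1 v2) (x + y).
Proof.
move=> [c1 ->] [c2 ->]; exists (fcat c1 c2); rewrite lcomb_fcat.
by congr (_ + _); apply: eq_bigr => j _; rewrite ?fcat_lshift ?fcat_rshift.
Qed.

Lemma indep_fcat n1 n2 (v1 : 'I_n1 -> H) (v2 : 'I_n2 -> H) :
  indep v1 -> indep v2 ->
  (forall c1 c2, lcomb c1 v1 + lcomb c2 v2 = 0 -> lcomb c1 v1 = 0) ->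
  indep (fcat v1 v2).
Proof.
move=> iv1 iv2 split_sum c; rewrite lcomb_fcat => c0.
have c10 := split_sum _ _ c0; rewrite c10 add0r in c0.
by move=> i; rewrite -(splitK i); case: (split i) => j /=; [exact: iv1 c10 j|exact: iv2 c0 j].
Qed.

Lemma lspan0 n (v : 'I_n -> H) : lspan v 0.
Proof. by exists (fun=> 0); rewrite /lcomb big1 // => i _; rewrite scale0r. Qed.

Lemma indep_fcat1 n (v : 'I_n -> H) x :
  indep v -> ~ lspan v x -> indep (fcat v (fun _ : 'I_1 => x)).
Proof.
move=> iv xNspan; have xN0 : x != 0 by apply: contra_notN xNspan => /eqP ->; apply: lspan0.
apply: indep_fcat => // [c|c1 c2]; rewrite /lcomb big_ord1.
  by move=> /eqP; rewrite scaler_eq0 (negbTE xN0) orbF => /eqP c0 i; rewrite ord1.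
move=> c0; have [c20|c2N0] := eqVneq (c2 ord0) 0.
  by move: c0; rewrite c20 scale0r addr0.
move/eqP: c0; rewrite addrC addr_eq0 => /eqP c2x.
exfalso; apply: xNspan; exists (fun j => - (c2 ord0)^-1 * c1 j).
rewrite -[x](scalerK c2N0) c2x scalerN /lcomb scaler_sumr -sumrN.
by apply: eq_bigr => j _; rewrite scalerA mulNr scaleNr.
Qed.

Section Subspace.
Variable S : set H.
Hypothesis subS : subspace S.

Lemma subspaceD x y : S x -> S y -> S (x + y).
Proof. by move=> Sx Sy; have := subS.2 1 x y Sx Sy; rewrite scale1r. Qed.

Lemma subspaceZ a x : S x -> S (a *: x).
Proof. by move=> Sx; have := subS.2 a x 0 Sx subS.1; rewrite addr0. Qed.

Lemma subspaceN x : S x -> S (- x).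
Proof. by move=> Sx; rewrite -scaleN1r; apply: subspaceZ. Qed.

Lemma subspaceB x y : S x -> S y -> S (x - y).
Proof. by move=> Sx Sy; rewrite -scaleN1r addrC; apply: subS.2. Qed.

Lemma subspace_lcomb n (c : 'I_n -> K) (v : 'I_n -> H) :
  (forall i, S (v i)) -> S (lcomb c v).
Proof.
move=> Sv; apply: (big_ind S) => [|x y|i _]; [exact: subS.1|exact: subspaceD|].
exact: subspaceZ.
Qed.

End Subspace.

Lemma subspace_range (f : {linear H -> H}) : subspace (range f).
Proof.
split; first by exists 0; rewrite ?linear0.
by move=> a _ _ [x _ <-] [y _ <-]; exists (a *: x + y); rewrite ?linearP.
Qed.

Lemma finite_dim_sub (S T : set H) : S `<=` T -> finite_dim T -> finite_dim S.
Proof. by move=> ST [n [v T_span]]; exists n, v => x /ST /T_span. Qed.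

Lemma indep_leq_span n m (v : 'I_n -> H) (w : 'I_m -> H) :
  (forall i, lspan v (w i)) -> indep w -> (m <= n)%N.
Proof.
move=> w_span indep_w; have [a w_lcomb] := choice w_span.
rewrite leqNgt; apply/negP => lt_nm.
pose A : 'M[K]_(m, n) := \matrix_(i, j) a i j.
(* a nonzero row of the left kernel of the coefficient matrix is a dependence among the w's *)
have : kermx A != 0.
  rewrite -mxrank_eq0 mxrank_ker subn_eq0 -ltnNge.
  exact: leq_ltn_trans (rank_leq_col A) lt_nm.
case/matrix0Pn => i0 [j0 kerA_nz].
pose c := row i0 (kermx A).
have cA : c *m A = 0 by rewrite -row_mul mulmx_ker row0.
have cA0 j : \sum_i c 0 i * a i j = 0 :> K.
  move/matrixP/(_ 0 j): cA; rewrite !mxE => cAj; rewrite -[RHS]cAj.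
  by apply: eq_bigr => i _; rewrite /A !mxE.
have : lcomb (fun i => c 0 i) w = 0.
  rewrite /lcomb (eq_bigr (fun i => \sum_j (c 0 i * a i j) *: v j)); last first.
    by move=> i _; rewrite w_lcomb /lcomb scaler_sumr; apply: eq_bigr => j _; rewrite scalerA.
  by rewrite exchange_big big1 // => j _; rewrite -scaler_suml cA0 scale0r.
by move/indep_w => /(_ j0); rewrite /c mxE => c0; rewrite c0 eqxx in kerA_nz.
Qed.

Lemma indep_spans (S : set H) n (v w : 'I_n -> H) :
  S `<=` lspan v -> (forall i, S (w i)) -> indep w -> S `<=` lspan w.
Proof.
move=> S_span Sw indep_w x Sx; apply: contrapT => xNspan.
suff : (n + 1 <= n)%N by rewrite addn1 ltnn.
apply: (indep_leq_span (v := v) (w := fcat w (fun=> x))); last exact: indep_fcat1.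
by apply: fcat_in => [i|_]; apply: S_span.
Qed.

End Families.

Section Dimension.
Variables (R : realType) (H : lmodType R[i]).
Implicit Types S : set H.

Lemma subspace_eigsp (f : {linear H -> H}) mu : subspace (eigsp f mu).
Proof.
split=> [|a x y fx fy]; first by rewrite /eigsp /= linear0 scaler0.
by rewrite /eigsp /= linearP fx fy scalerDr scalerA mulrC -scalerA.
Qed.

Lemma h_dim_ge S n : indep_in S n -> ((n%:R)%:E <= h_dim S)%E.
Proof. by move=> Sn; apply: ereal_sup_ubound; exists n. Qed.

Lemma h_dim_basis S n (v : 'I_n -> H) :
  (forall i, S (v i)) -> indep v -> S `<=` lspan v -> h_dim S = (n%:R)%:E.
Proof.
move=> Sv iv S_span; apply/eqP; rewrite eq_le h_dim_ge; last by exists v.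
rewrite andbT; apply: ge_ereal_sup => _ [m [w [Sw iw]] <-].
by rewrite lee_fin ler_nat; apply: (indep_leq_span (v := v)) iw => i; apply: S_span.
Qed.

Lemma h_dim_infty S : (forall n, indep_in S n) -> h_dim S = +oo%E.
Proof.
move=> Sn; have Sge n : ((n%:R)%:E <= h_dim S)%E by apply: h_dim_ge.
case: (h_dim S) Sge => // [r|] Sge; last by have := Sge 0%N; rewrite leeNy_eq.
have := Sge (Num.bound `|r|); rewrite lee_fin => le_bound_r.
have := lt_le_trans (archi_boundP (normr_ge0 r)) le_bound_r.
by rewrite ltNge ler_norm.
Qed.

Lemma h_dim_image (f : {linear H -> H}) S : injective f -> h_dim (f @` S) = h_dim S.
Proof.
move=> inj_f; rewrite /h_dim; congr (ereal_sup [set _ | _ in _]).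
apply/funext => n; apply/propext; split=> [[w [Sw iw]]|[u [Su iu]]].
  have [u fu] := choice (fun i => let: ex_intro2 x Sx fx := Sw i in ex_intro _ x (conj Sx fx)).
  exists u; split=> [i|c]; first by case: (fu i).
  rewrite -/(lcomb c u) => c0.
  by apply: (iw : indep w); rewrite -(eq_lcomb c (fun i => (fu i).2)) -linear_lcomb c0 linear0.
exists (f \o u); split=> [i|c]; first by exists (u i).
by rewrite -/(lcomb c (f \o u)) -linear_lcomb -(linear0 f) => /inj_f; apply: iu.
Qed.

End Dimension.

Section InnerProduct.
Variables (R : realType) (H : lmodType R[i]) (ip : H -> H -> R[i]).
Local Notation C := R[i].
Hypothesis ipDZl : forall (a : C) (x y z : H), ip (a *: x + y) z = a * ip x z + ip y z.
Hypothesis ipC : forall x y, ip x y = (ip y x)^*.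
Hypothesis ip_ge0 : forall x, 0 <= ip x x.
Hypothesis ip_eq0 : forall x, ip x x = 0 -> x = 0.
Implicit Types (S : set H) (x y z : H).

Lemma ip0l z : ip 0 z = 0.
Proof.
have := ipDZl 1 0 0 z; rewrite scaler0 addr0 mul1r.
by rewrite -{1}[ip 0 z]addr0 => /addrI <-.
Qed.

Lemma ipDl x y z : ip (x + y) z = ip x z + ip y z.
Proof. by rewrite -[x]scale1r ipDZl mul1r scale1r. Qed.

Lemma ipZl a x z : ip (a *: x) z = a * ip x z.
Proof. by rewrite -[a *: x]addr0 ipDZl ip0l addr0. Qed.

Lemma ipBl x y z : ip (x - y) z = ip x z - ip y z.
Proof. by rewrite -scaleN1r ipDl ipZl mulN1r. Qed.

Lemma ip0r z : ip z 0 = 0.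
Proof. by rewrite ipC ip0l conjC0. Qed.

Lemma ipZr a x z : ip z (a *: x) = a^* * ip z x.
Proof. by rewrite [LHS]ipC [ip z x]ipC ipZl rmorphM. Qed.

Lemma ipDr x y z : ip z (x + y) = ip z x + ip z y.
Proof. by rewrite [LHS]ipC [ip z x]ipC [ip z y]ipC ipDl rmorphD. Qed.

Lemma ipBr x y z : ip z (x - y) = ip z x - ip z y.
Proof. by rewrite [LHS]ipC [ip z x]ipC [ip z y]ipC ipBl rmorphB. Qed.

Lemma ip_lcomb n (c : 'I_n -> C) (v : 'I_n -> H) z :
  ip (lcomb c v) z = \sum_i c i * ip (v i) z.
Proof.
rewrite /lcomb; elim/big_rec2: _ => [|i s1 s2 _ <-]; first exact: ip0l.
by rewrite ipDl ipZl.
Qed.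

Lemma eq_ip_r x y : (forall z, ip z x = ip z y) -> x = y.
Proof. by move=> xy; apply/eqP; rewrite -subr_eq0; apply/eqP/ip_eq0; rewrite ipBr xy subrr. Qed.

Definition orthonormal n (v : 'I_n -> H) : Prop :=
  forall i j, ip (v i) (v j) = (i == j)%:R.

Definition orthonormal_seq (e : nat -> H) : Prop :=
  forall i j, ip (e i) (e j) = (i == j)%:R.

Definition orthonormal_basis S n (v : 'I_n -> H) : Prop :=
  [/\ forall i, S (v i), orthonormal v & S `<=` lspan v].

Lemma ip_lcomb_orthonormal n (c : 'I_n -> C) (v : 'I_n -> H) j :
  orthonormal v -> ip (lcomb c v) (v j) = c j.
Proof.
move=> ov; rewrite ip_lcomb (bigD1 j) //= ov eqxx mulr1 big1 ?addr0 // => i /negbTE ij.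
by rewrite ov ij mulr0.
Qed.

Lemma orthonormal_indep n (v : 'I_n -> H) : orthonormal v -> indep v.
Proof. by move=> ov c c0 i; rewrite -(ip_lcomb_orthonormal c i ov) c0 ip0l. Qed.

Lemma orthonormal_fcat n1 n2 (v1 : 'I_n1 -> H) (v2 : 'I_n2 -> H) :
  orthonormal v1 -> orthonormal v2 -> (forall i j, ip (v1 i) (v2 j) = 0) ->
  orthonormal (fcat v1 v2).
Proof.
move=> o1 o2 o12 i j; rewrite -(splitK i) -(splitK j) (inj_eq (can_inj unsplitK)).
case: (split i) (split j) => i' [] j'; rewrite ?fcat_lshift ?fcat_rshift.
- exact: o1.
- exact: o12.
- by rewrite ipC o12 conjC0.
- exact: o2.
Qed.

Lemma ip_sub_proj n (u : 'I_n -> H) x i :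
  orthonormal u -> ip (x - lcomb (fun j => ip x (u j)) u) (u i) = 0.
Proof. by move=> ou; rewrite ipBl ip_lcomb_orthonormal // subrr. Qed.

Lemma orthonormal_extend S n (u : 'I_n -> H) x :
  subspace S -> (forall i, S (u i)) -> orthonormal u -> S x -> ~ lspan u x ->
  exists y, [/\ S y, ip y y = 1 & forall i, ip (u i) y = 0].
Proof.
move=> subS Su ou Sx xNspan.
pose w := x - lcomb (fun j => ip x (u j)) u.
have w_perp i : ip w (u i) = 0 by apply: ip_sub_proj.
have w0 : w != 0.
  apply/eqP => w0; apply: xNspan; exists (fun j => ip x (u j)).
  by apply/eqP; rewrite -subr_eq0 -/w w0.
pose s := sqrtC (ip w w).
have s_gt0 : 0 < s.
  by rewrite sqrtC_gt0 lt_def ip_ge0 andbT; apply: contra w0 => /eqP/ip_eq0 ->.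
exists (s^-1 *: w); split.
- by apply: subspaceZ => //; apply: subspaceB => //; apply: subspace_lcomb.
- rewrite ipZl ipZr geC0_conj ?invr_ge0 ?ltW // mulrA -expr2.
  by rewrite -[ip w w]sqrtCK -/s -exprMn mulVf ?expr1n // gt_eqF.
- by move=> i; rewrite ipZr ipC w_perp conjC0 mulr0.
Qed.

Lemma orthonormal_seq_of_extend S :
  (forall n (u : 'I_n -> H), (forall i, S (u i)) -> orthonormal u ->
     exists y, [/\ S y, ip y y = 1 & forall i, ip (u i) y = 0]) ->
  exists2 e : nat -> H, forall n, S (e n) & orthonormal_seq e.
Proof.
move=> extend.
pose ok n (e : nat -> H) := (forall i, (i < n)%N -> S (e i)) /\
  (forall i j, (i < n)%N -> (j < n)%N -> ip (e i) (e j) = (i == j)%:R).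
have next_ex s : exists y, ok (size s) (nth 0 s) ->
    [/\ S y, ip y y = 1 & forall i, (i < size s)%N -> ip (nth 0 s i) y = 0].
  have [[Ss os]|not_ok] := pselect (ok (size s) (nth 0 s)); last by exists 0 => /not_ok.
  have [y [Sy yy sy]] := extend (size s) (fun i => nth 0 s i)
    (fun i => Ss i (ltn_ord i)) (fun i j => os i j (ltn_ord i) (ltn_ord j)).
  by exists y => _; split=> // i lt_is; apply: (sy (Ordinal lt_is)).
have [next nextP] := choice next_ex.
pose fix prefix n := if n is k.+1 then rcons (prefix k) (next (prefix k)) else [::].
pose e n := next (prefix n).
have prefixE n : prefix n = mkseq e n by elim: n => //= n IHn; rewrite mkseqS -IHn.
have ok_e n : ok n e.
  elim: n => [|n [Se oe]]; first by split.
  have [] := nextP (mkseq e n).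
    by rewrite size_mkseq; split=> [i|i j] lt_in *; rewrite !nth_mkseq //; [apply: Se|apply: oe].
  rewrite size_mkseq -prefixE -/(e n) => Sen enen en_perp.
  have {}en_perp i : (i < n)%N -> ip (e i) (e n) = 0.
    by move=> lt_in; rewrite -(nth_mkseq 0 e lt_in) -prefixE en_perp.
  have lt_Sn i : (i < n.+1)%N -> i = n \/ (i < n)%N.
    by rewrite ltnS leq_eqVlt => /orP [/eqP|]; [left|right].
  split=> [i /lt_Sn [->|/Se] //|i j /lt_Sn [->|lt_in] /lt_Sn [->|lt_jn]].
  - by rewrite eqxx.
  - by rewrite ipC en_perp // conjC0 gtn_eqF.
  - by rewrite en_perp // ltn_eqF.
  - exact: oe.
exists e => [n|i j]; first by apply: (ok_e n.+1).1.
by apply: (ok_e (maxn i j).+1).2; rewrite ltnS ?leq_maxl ?leq_maxr.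
Qed.

Lemma orthonormal_seq_indep_in S (e : nat -> H) :
  (forall n, S (e n)) -> orthonormal_seq e -> forall n, indep_in S n.
Proof.
move=> Se oe n; exists (fun i : 'I_n => e i); split=> //.
by apply: orthonormal_indep => i j; rewrite oe.
Qed.

Lemma onb_or_orthonormal_seq S : subspace S ->
  (exists n (v : 'I_n -> H), orthonormal_basis S v) \/
  (exists2 e : nat -> H, forall n, S (e n) & orthonormal_seq e).
Proof.
move=> subS; have [|no_onb] := pselect (exists n (v : 'I_n -> H), orthonormal_basis S v).
  by left.
right; apply: orthonormal_seq_of_extend => n u Su ou.
have [x Sx xNspan] : exists2 x, S x & ~ lspan u x.
  apply: contrapT => all_span; apply: no_onb; exists n, u; split=> // x Sx.
  by apply: contrapT => xNspan; apply: all_span; exists x.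
exact: (orthonormal_extend subS Su ou Sx xNspan).
Qed.

Lemma finite_dim_onb S : subspace S -> finite_dim S ->
  exists n (v : 'I_n -> H), orthonormal_basis S v.
Proof.
move=> subS [k [v S_span]]; case: (onb_or_orthonormal_seq subS) => // [[e Se oe]].
have [w [Sw iw]] := orthonormal_seq_indep_in Se oe k.+1.
by have := indep_leq_span (fun i => S_span _ (Sw i)) iw; rewrite ltnn.
Qed.

Lemma h_dim_onb S n (v : 'I_n -> H) : orthonormal_basis S v -> h_dim S = (n%:R)%:E.
Proof. by case=> Sv ov S_span; apply: h_dim_basis S_span => //; apply: orthonormal_indep. Qed.

Lemma h_dim_not_finite S : subspace S -> ~ finite_dim S -> h_dim S = +oo%E.
Proof.
move=> subS Sinf; case: (onb_or_orthonormal_seq subS) => [[n [v [_ _ S_span]]]|[e Se oe]].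
  by exfalso; apply: Sinf; exists n, v.
exact/h_dim_infty/(orthonormal_seq_indep_in Se oe).
Qed.

Lemma parallelogram x y :
  ip (x - y) (x - y) + ip (x + y) (x + y) = 2 * ip x x + 2 * ip y y.
Proof. by rewrite !ipBl !ipDl !ipBr !ipDr; ring. Qed.

Lemma hnorm_ltE x e : 0 <= e -> (hnorm ip x < e) = (ip x x < e ^+ 2).
Proof.
move=> e_ge0; rewrite /hnorm -[X in _ < X](sqrCK e_ge0).
by rewrite ltr_sqrtC // nnegrE ?ip_ge0 ?exprn_ge0.
Qed.

(* For an orthonormal sequence of eigenvectors, |T e_i - T e_j|^2 = 2 |mu|^2 when
   i <> j, while two consecutive terms of a convergent subsequence are eventually
   within |mu|/2 of the limit. *)
Lemma compact_eigsp_finite_dim (T : {linear H -> H}) mu :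
  h_compact ip T -> mu != 0 -> finite_dim (eigsp T mu).
Proof.
move=> compT mu0; apply: contrapT => Einf.
case: (onb_or_orthonormal_seq (subspace_eigsp T mu)) => [[n [v [_ _ E_span]]]|[e Te oe]].
  by apply: Einf; exists n, v.
have [|phi [l [phi_incr conv]]] := compT e.
  by exists 1 => n; rewrite /hnorm oe eqxx sqrtC1.
pose eps := `|mu| / 2.
have eps_gt0 : 0 < eps by rewrite divr_gt0 ?normr_gt0 ?ltr0n.
have [N close] := conv eps eps_gt0.
set a := T (e (phi N)) - l; set b := T (e (phi N.+1)) - l.
have small n : (N <= n)%N -> ip (T (e (phi n)) - l) (T (e (phi n)) - l) < eps ^+ 2.
  by move/close; rewrite hnorm_ltE ?ltW.
have ab : ip (a - b) (a - b) = 2 * `|mu| ^+ 2.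
  have -> : a - b = mu *: (e (phi N) - e (phi N.+1)).
    by rewrite /a /b opprB addrA subrK !Te scalerBr.
  rewrite ipZl ipZr !ipBl !ipBr !oe !eqxx (ltn_eqF (phi_incr N)) (gtn_eqF (phi_incr N)).
  by rewrite normCK /=; ring.
have : 2 * `|mu| ^+ 2 < `|mu| ^+ 2.
  rewrite -{1}ab; apply: (le_lt_trans (y := 2 * ip a a + 2 * ip b b)).
    by rewrite -parallelogram lerDl.
  have -> : `|mu| ^+ 2 = 2 * eps ^+ 2 + 2 * eps ^+ 2 by rewrite /eps; field.
  by apply: ltrD; rewrite ltr_pM2l ?ltr0n // small.
by rewrite gtr_pMl ?exprn_gt0 ?normr_gt0 // ltrn1.
Qed.

Section ProjectionPair.
Variables P Q : {linear H -> H}.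
Hypothesis PP : forall x, P (P x) = P x.
Hypothesis QQ : forall x, Q (Q x) = Q x.
Hypothesis P_sa : forall x y, ip (P x) y = ip x (P y).
Hypothesis Q_sa : forall x y, ip (Q x) y = ip x (Q y).

Lemma proj_ip_self x : ip (P x) x = ip (P x) (P x).
Proof. by rewrite -{1}PP P_sa. Qed.

(* |x|^2 = |P x|^2 - |Q x|^2 forces |x - P x|^2 + |Q x|^2 = 0. *)
Lemma sub_proj_eq x : P x - Q x = x -> P x = x /\ Q x = 0.
Proof.
move=> PQx.
have ipQQ : ip (Q x) x = ip (Q x) (Q x) by rewrite -{1}QQ Q_sa.
have xx : ip x x = ip (P x) (P x) - ip (Q x) (Q x).
  by rewrite -{1}PQx ipBl proj_ip_self ipQQ.
have : ip (x - P x) (x - P x) + ip (Q x) (Q x) == 0.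
  rewrite !ipBl !ipBr proj_ip_self [ip x (P x)]ipC proj_ip_self geC0_conj //.
  by rewrite xx; apply/eqP; ring.
rewrite paddr_eq0 // => /andP [/eqP/ip_eq0/eqP xPx /eqP/ip_eq0 Qx0].
by split=> //; apply/eqP; rewrite eq_sym -subr_eq0.
Qed.

End ProjectionPair.

Section ProjectionDifference.
Variables P Q : {linear H -> H}.
Hypothesis PP : forall x, P (P x) = P x.
Hypothesis QQ : forall x, Q (Q x) = Q x.
Hypothesis P_sa : forall x y, ip (P x) y = ip x (P y).
Hypothesis Q_sa : forall x y, ip (Q x) y = ip x (Q y).

Definition proj_diff : {linear H -> H} := P \- Q.
Definition proj_cross : {linear H -> H} := (idfun \- P) \o Q.

Lemma proj_diffE x : proj_diff x = P x - Q x. Proof. by []. Qed.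
Lemma proj_crossE x : proj_cross x = Q x - P (Q x). Proof. by []. Qed.

Local Notation A := proj_diff.
Local Notation Phi := proj_cross.
Local Notation M1 := (range (P \o (idfun \- Q))).
Local Notation M2 := (range Phi).
Local Notation F := (range (Phi \o P \o (idfun \- Q))).
Local Notation E1 := (eigsp A 1).
Local Notation Em1 := (eigsp A (-1)).

Lemma eigsp_diff1P x : E1 x <-> P x = x /\ Q x = 0.
Proof.
rewrite /eigsp /= scale1r; split; first exact: sub_proj_eq.
by case=> -> ->; rewrite subr0.
Qed.

Lemma eigsp_diffN1P x : Em1 x <-> P x = 0 /\ Q x = x.
Proof.
rewrite /eigsp /= scaleN1r; split; last by case=> -> ->; rewrite sub0r.
move=> PQx; have QPx : Q x - P x = x by rewrite -opprB PQx opprK.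
by have [] := sub_proj_eq QQ PP Q_sa P_sa QPx.
Qed.

Lemma proj_M1 m : M1 m -> P m = m.
Proof. by case=> y _ <-; rewrite /= PP. Qed.

Lemma proj_M2 w : M2 w -> P w = 0.
Proof. by case=> y _ <-; rewrite /= linearB PP subrr. Qed.

Lemma eigsp_diff1_M1 x : E1 x -> M1 x.
Proof. by move/eigsp_diff1P=> [Px Qx]; exists x => //=; rewrite Qx subr0. Qed.

Lemma eigsp_diffN1_M2 x : Em1 x -> M2 x.
Proof. by move/eigsp_diffN1P=> [Px Qx]; exists x => //=; rewrite Qx Px subr0. Qed.

Lemma cross_eigsp_diff1 x : E1 x -> Phi x = 0.
Proof. by move/eigsp_diff1P=> [_ Qx]; rewrite /= Qx linear0 subr0. Qed.

Lemma cross_M1_eq0 m : M1 m -> Phi m = 0 -> E1 m.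
Proof.
move=> M1m; have Pm := proj_M1 M1m; case: M1m => y _ my.
move/eqP; rewrite /= subr_eq0 => /eqP PQm.
have : ip m (Q m) = 0.
  by rewrite {1}PQm -{1}my P_sa /= PP -PQm ipBl Q_sa QQ subrr.
by rewrite -{1}QQ -Q_sa => /ip_eq0 Qm; apply/eigsp_diff1P.
Qed.

Lemma F_perp_eigsp_diffN1 f e : F f -> Em1 e -> ip f e = 0.
Proof.
case=> y _ <- /eigsp_diffN1P [Pe Qe].
by rewrite /= ipBl Q_sa Qe !P_sa Pe !ip0r subrr.
Qed.

Lemma M2_perp_F w : M2 w -> (forall f, F f -> ip w f = 0) -> Em1 w.
Proof.
move=> M2w w_perp; have Pw := proj_M2 M2w.
have PQw : P (Q w) = 0.
  have := w_perp _ (ex_intro2 _ _ w I erefl).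
  rewrite /= ipBr -(Q_sa w) -(P_sa w) Pw ip0l subr0 linearB Pw ipBr ip0r sub0r.
  rewrite -P_sa -{1}PP P_sa => /eqP; rewrite oppr_eq0 => /eqP.
  exact: ip_eq0.
have Qw : Q w = w.
  have [y _ wy] := M2w.
  have QwB : Q (w - Q w) = 0 by rewrite linearB QQ subrr.
  have PwB : P (w - Q w) = 0 by rewrite linearB Pw PQw subrr.
  have : ip (w - Q w) (w - Q w) = 0.
    by rewrite {1}ipBl -{1}wy /= ipBl (Q_sa y) (P_sa (Q y)) (Q_sa w) QwB PwB !ip0r !subrr.
  by move/ip_eq0/eqP; rewrite subr_eq0 eq_sym => /eqP.
exact/eigsp_diffN1P.
Qed.


Lemma diff_sa x y : ip (A x) y = ip x (A y).
Proof. by rewrite /= ipBl ipBr P_sa Q_sa. Qed.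

Lemma range_diff_split r : range A r -> M1 (P r) /\ M2 (P r - r).
Proof.
case=> y _ <-; split; exists y => //; rewrite proj_diffE (linearB P) PP.
  by rewrite /= (linearB P).
by rewrite proj_crossE opprB [RHS]addrC addrA subrK.
Qed.

Lemma proj_diff_sq x : P (A (A x)) = A (A (P x)).
Proof.
rewrite !proj_diffE !(linearB P) !(linearB Q) !PP !QQ (linearB P) subrr subr0.
by rewrite opprB addrA subrK.
Qed.

(* A is injective on its finite-dimensional range, hence maps it onto itself. *)
Lemma range_diff_sq : finite_dim (range A) -> forall r, range A r -> exists y, r = A (A y).
Proof.
move=> RAfin; have [n [v [RAv ov RA_span]]] := finite_dim_onb (subspace_range A) RAfin.
have indep_Av : indep (A \o v).
  move=> c; rewrite -linear_lcomb => Ac0; apply: (orthonormal_indep ov).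
  have [y _ Ay] : range A (lcomb c v) by apply: subspace_lcomb => //; apply: subspace_range.
  by apply: ip_eq0; rewrite -{1}Ay diff_sa Ac0 ip0r.
move=> r /(indep_spans RA_span (fun i => ex_intro2 _ _ (v i) I erefl) indep_Av) [c ->].
have [y _ Ay] : range A (lcomb c v) by apply: subspace_lcomb => //; apply: subspace_range.
by exists y; rewrite -linear_lcomb Ay.
Qed.

Lemma range_diff_finite_sub : finite_dim (range A) -> M1 `<=` range A /\ M2 `<=` range A.
Proof.
move=> RAfin; have A2 := range_diff_sq RAfin.
have PA_range y : range A (P (A y)).
  by have [z ->] := A2 _ (ex_intro2 _ _ y I erefl); rewrite proj_diff_sq; exists (A (P z)).
split=> _ [y _ <-].
  by rewrite /= (linearB P); have := PA_range y; rewrite proj_diffE (linearB P) PP.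
have -> : Phi y = P (A y) - A y.
  by rewrite proj_diffE (linearB P) PP proj_crossE opprB [RHS]addrC addrA subrK.
by apply: subspaceB; [apply: subspace_range|apply: PA_range|exists y].
Qed.

Lemma ip_lcomb_perp n (c : 'I_n -> R[i]) (v : 'I_n -> H) z :
  (forall i, ip z (v i) = 0) -> ip z (lcomb c v) = 0.
Proof.
by move=> zv; rewrite ipC ip_lcomb big1 ?conjC0 // => i _; rewrite ipC zv conjC0 mulr0.
Qed.

Lemma M1_basis n1 n2 (g : 'I_n1 -> H) (m : 'I_n2 -> H) :
  orthonormal_basis E1 g -> (forall j, M1 (m j)) -> orthonormal_basis F (Phi \o m) ->
  [/\ forall i, M1 (fcat g m i), indep (fcat g m) & M1 `<=` lspan (fcat g m)].
Proof.
move=> [E1g og E1_span] M1m [_ oh F_span].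
have Phi_g i : Phi (g i) = 0 by apply: cross_eigsp_diff1.
split.
- by apply: fcat_in => // i; apply: eigsp_diff1_M1.
- apply: indep_fcat; first exact: orthonormal_indep.
    by move=> c c0; apply: (orthonormal_indep oh); rewrite -linear_lcomb c0 linear0.
  move=> c1 c2 c12; have := congr1 Phi c12.
  rewrite linear0 linearD !linear_lcomb (eq_lcomb c1 Phi_g) /lcomb big1 ?add0r.
    move/(orthonormal_indep oh) => c20; move: c12.
    by rewrite /lcomb [X in _ + X]big1 ?addr0 // => j _; rewrite c20 scale0r.
  by move=> i _; rewrite scaler0.
- move=> x M1x; have [d Phi_x] : lspan (Phi \o m) (Phi x).
    by apply: F_span; case: M1x => y _ <-; exists y.
  rewrite -[x](subrK (lcomb d m)); apply: lspan_fcatD; last by exists d.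
  apply/E1_span/cross_M1_eq0; last by rewrite linearB linear_lcomb Phi_x subrr.
  by apply: (subspaceB (subspace_range _)) => //; apply: (subspace_lcomb (subspace_range _)).
Qed.

Lemma F_sub_M2 : F `<=` M2.
Proof. by move=> _ [y _ <-]; exists (P (y - Q y)). Qed.

Lemma M2_basis n1 n2 (h : 'I_n1 -> H) (k : 'I_n2 -> H) :
  orthonormal_basis F h -> orthonormal_basis Em1 k ->
  [/\ forall i, M2 (fcat h k i), orthonormal (fcat h k) & M2 `<=` lspan (fcat h k)].
Proof.
move=> [Fh oh F_span] [Ek ok Em1_span]; split.
- by apply: fcat_in => i; [apply: F_sub_M2|apply: eigsp_diffN1_M2].
- by apply: orthonormal_fcat => // i j; apply: F_perp_eigsp_diffN1.
- move=> w M2w; pose c j := ip w (h j).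
  rewrite -[w](addrNK (lcomb c h)) addrC; apply: lspan_fcatD; first by exists c.
  apply/Em1_span/M2_perp_F.
    apply: (subspaceB (subspace_range _)) => //.
    by apply: (subspace_lcomb (subspace_range _)) => i; apply: F_sub_M2.
  by move=> f /F_span [d ->]; apply: ip_lcomb_perp => i; apply: ip_sub_proj.
Qed.

Lemma h_dim_range_diff : finite_dim E1 -> finite_dim Em1 ->
  h_dim (range A) = (2%:E * h_dim M2 + h_dim E1 - h_dim Em1)%E.
Proof.
move=> E1fin Em1fin.
have [n1 [g g_onb]] := finite_dim_onb (subspace_eigsp A 1) E1fin.
have [n3 [k k_onb]] := finite_dim_onb (subspace_eigsp A (-1)) Em1fin.
rewrite (h_dim_onb g_onb) (h_dim_onb k_onb).
have [Ffin|Finf] := pselect (finite_dim F); last first.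
  have M2inf : ~ finite_dim M2 by move/(finite_dim_sub F_sub_M2).
  have RAinf : ~ finite_dim (range A).
    by move=> RAfin; apply/M2inf/(finite_dim_sub (range_diff_finite_sub RAfin).2).
  rewrite !h_dim_not_finite //; try exact: subspace_range.
  by rewrite gt0_muley ?lte_fin ?ltr0n.
have [n2 [h h_onb]] := finite_dim_onb (subspace_range _) Ffin.
have [m M1m hE] : exists2 m : 'I_n2 -> H, (forall j, M1 (m j)) & h = Phi \o m.
  have [Fh _ _] := h_onb.
  have pre j : exists y, (Phi \o P \o (idfun \- Q)) y = h j by case: (Fh j) => y _ <-; exists y.
  have [y yE] := choice pre.
  by exists (fun j => P (y j - Q (y j))) => [j|]; [exists (y j)|apply/funext => j; rewrite -yE].
have h_onb' := h_onb; rewrite hE in h_onb'.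
have [M1b indep_M1b M1_span] := M1_basis g_onb M1m h_onb'.
have [M2b on_M2b M2_span] := M2_basis h_onb k_onb.
have RA_span : range A `<=` lspan (fcat (fcat g m) (fcat h k)).
  move=> r /range_diff_split [M1Pr M2Prr]; rewrite -[r](subrKC (P r)).
  apply: lspan_fcatD; first exact: M1_span.
  by apply: M2_span; rewrite -opprB; apply: (subspaceN (subspace_range _)).
have [M1_RA M2_RA] : M1 `<=` range A /\ M2 `<=` range A.
  by apply: range_diff_finite_sub; do 2 eexists; exact: RA_span.
rewrite (h_dim_basis _ _ RA_span); first last.
- apply: indep_fcat => // [|c1 c2 c12]; first exact: orthonormal_indep.
  have := congr1 P c12; rewrite linear0 linearD proj_M1; last first.
    by apply: (subspace_lcomb (subspace_range _)).
  by rewrite proj_M2 ?addr0 //; apply: (subspace_lcomb (subspace_range _)).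
- by apply: fcat_in => i; [apply/M1_RA/M1b|apply/M2_RA/M2b].
rewrite (h_dim_basis M2b (orthonormal_indep on_M2b) M2_span).
by rewrite -EFinM -EFinN -!EFinD !natrD; congr (_%:E); ring.
Qed.

End ProjectionDifference.

Lemma adjoint_isometryK (T Ts : H -> H) :
  h_isometry ip T -> h_adjoint ip T Ts -> cancel T Ts.
Proof. by move=> T_iso T_adj x; apply: eq_ip_r => z; rewrite -T_adj T_iso. Qed.

Lemma adjoint_sym (T Ts : H -> H) x y : h_adjoint ip T Ts -> ip x (T y) = ip (Ts x) y.
Proof. by move=> T_adj; rewrite ipC T_adj -ipC. Qed.

Lemma adjoint_linear (T : {linear H -> H}) (Ts : H -> H) : h_adjoint ip T Ts -> linear Ts.
Proof.
move=> T_adj a x y; apply: eq_ip_r => z.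
by rewrite ipDr ipZr -!T_adj ipDr ipZr.
Qed.

Section IsometricPair.
Variables V1 V2 V1s V2s : {linear H -> H}.
Hypothesis V1_iso : h_isometry ip V1.
Hypothesis V2_iso : h_isometry ip V2.
Hypothesis V12C : forall x, V1 (V2 x) = V2 (V1 x).
Hypothesis V1_adj : h_adjoint ip V1 V1s.
Hypothesis V2_adj : h_adjoint ip V2 V2s.

Let V1K := adjoint_isometryK V1_iso V1_adj.
Let V2K := adjoint_isometryK V2_iso V2_adj.

Lemma adjoint_commute x : V1s (V2s x) = V2s (V1s x).
Proof. by apply: eq_ip_r => z; rewrite -V1_adj -!V2_adj -V1_adj V12C. Qed.

Definition proj_kerV2s : {linear H -> H} := idfun \- (V2 \o V2s).
Definition proj_V1kerV2s : {linear H -> H} := V1 \o proj_kerV2s \o V1s.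
Local Notation P := proj_kerV2s.
Local Notation Q := proj_V1kerV2s.

Lemma proj_kerV2sE x : P x = x - V2 (V2s x). Proof. by []. Qed.
Lemma proj_V1kerV2sE x : Q x = V1 (P (V1s x)). Proof. by []. Qed.

Lemma V2s_proj_kerV2s x : V2s (P x) = 0.
Proof. by rewrite proj_kerV2sE linearB V2K subrr. Qed.

Lemma proj_kerV2s_idem x : P (P x) = P x.
Proof. by rewrite {1}proj_kerV2sE V2s_proj_kerV2s linear0 subr0. Qed.

Lemma proj_V1kerV2s_idem x : Q (Q x) = Q x.
Proof. by rewrite !proj_V1kerV2sE V1K proj_kerV2s_idem. Qed.

Lemma proj_kerV2s_sa x y : ip (P x) y = ip x (P y).
Proof. by rewrite !proj_kerV2sE ipBl ipBr V2_adj (adjoint_sym _ _ V2_adj). Qed.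

Lemma proj_V1kerV2s_sa x y : ip (Q x) y = ip x (Q y).
Proof. by rewrite !proj_V1kerV2sE V1_adj proj_kerV2s_sa (adjoint_sym _ _ V1_adj). Qed.

Lemma defect_proj_diff : defect V1 V2 V1s V2s = proj_diff P Q.
Proof.
apply/funext => x; rewrite proj_diffE proj_V1kerV2sE !proj_kerV2sE linearB -adjoint_commute.
by rewrite /defect opprB addrA (addrAC x) [LHS]addrAC.
Qed.

Lemma proj_cross_commut x : proj_cross P Q x = V2 (commut V1 V2s (V1s x)).
Proof.
rewrite proj_crossE proj_V1kerV2sE !proj_kerV2sE opprB addrC subrK /commut.
by rewrite (linearB V1) (linearB V2s) V12C V2K.
Qed.

Lemma range_proj_cross : range (proj_cross P Q) = V2 @` range (commut V1 V2s).
Proof.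
apply/seteqP; split=> [_ [y _ <-]|_ [_ [z _ <-] <-]].
  by rewrite proj_cross_commut; exists (commut V1 V2s (V1s y)) => //; exists (V1s y).
by exists (V1 z) => //; rewrite proj_cross_commut V1K.
Qed.

Lemma h_rank_defect : h_compact ip (defect V1 V2 V1s V2s) ->
  h_rank (defect V1 V2 V1s V2s) =
    (2%:E * h_rank (commut V1 V2s)
     + h_dim (eigsp (defect V1 V2 V1s V2s) 1%R)
     - h_dim (eigsp (defect V1 V2 V1s V2s) (-1)%R))%E.
Proof.
rewrite defect_proj_diff /h_rank => compA.
have fin mu : mu != 0 -> finite_dim (eigsp (proj_diff P Q) mu).
  exact: compact_eigsp_finite_dim.
have m1_neq0 : - 1 != 0 :> R[i] by rewrite oppr_eq0 oner_neq0.
rewrite (h_dim_range_diff proj_kerV2s_idem proj_V1kerV2s_idem proj_kerV2s_sa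
  proj_V1kerV2s_sa (fin _ (oner_neq0 _)) (fin _ m1_neq0)).
by rewrite range_proj_cross h_dim_image //; apply: can_inj V2K.
Qed.

End IsometricPair.

End InnerProduct.

Theorem corollary3p6 (R : realType) (H : lmodType R[i]) (ip : H -> H -> R[i])
  (V1 V2 : {linear H -> H}) (V1s V2s : H -> H) :
  is_separable_hilbert ip ->
  h_isometry ip V1 -> h_isometry ip V2 ->
  (forall x, V1 (V2 x) = V2 (V1 x)) ->
  h_adjoint ip V1 V1s -> h_adjoint ip V2 V2s ->
  h_compact ip (defect V1 V2 V1s V2s) ->
  h_rank (defect V1 V2 V1s V2s) =
    (2%:E * h_rank (commut V1 V2s)
     + h_dim (eigsp (defect V1 V2 V1s V2s) 1%R)
     - h_dim (eigsp (defect V1 V2 V1s V2s) (-1)%R))%E.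
Proof.
move=> [ipDZl ipC ip_ge0 [ip_eq0 _] _] V1_iso V2_iso V12C V1_adj V2_adj.
have V1s_lin : linear V1s by apply: adjoint_linear V1_adj.
have V2s_lin : linear V2s by apply: adjoint_linear V2_adj.
pose V1sL : {linear H -> H} := HB.pack V1s (GRing.isLinear.Build _ _ _ _ V1s V1s_lin).
pose V2sL : {linear H -> H} := HB.pack V2s (GRing.isLinear.Build _ _ _ _ V2s V2s_lin).
exact: (@h_rank_defect _ _ _ ipDZl ipC ip_ge0 ip_eq0 V1 V2 V1sL V2sL).
Qed.
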